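(* In the IM-OCP setting described in the context, for any initialization $r_1\in[0,B]$, any positive step sizes $(\eta_t)_{t\ge1}$, and any realization of the feedback indicators $(\mathrm{obs}_t)_{t\ge1}$, the iterates satisfy, for every $t>1$, $$r_t\in\left[-\frac{\alpha\,\varpi_t}{\mu},\; B+\frac{(1-\alpha)\,\varpi_t}{\mu}\right],\qquad \varpi_t=\max_{i\in\{1,\dots,t-1\}}\frac{\eta_i}{p_i}.$$
   Context: Fix $\alpha\in(0,1)$ and $B>0$. Let $(r_t^* )_{t\ge1}$ be an arbitrary deterministic sequence of scores with $r_t^*\in[0,B]$ (the score $r_t^*=s(X_t,Y_t)$ of the true label; the prediction set at time $t$ is $\{y: s(X_t,y)\le r_t\}$). Given thresholds $r_t$, the miscoverage indicator is $E_t=\mathbb{1}\{r_t^*>r_t\}$. The quantile loss is $\ell_{1-\alpha}(r,r^* )=(\alpha-\mathbb{1}\{r<r^*\})(r-r^* )$. Let $P$ be a probability distribution on $[0,B]$ with bounded density, $\sigma>0$, and $R(r)=\mathbb{E}_{r^*\sim P}[\ell_{1-\alpha}(r,r^* )]+\frac{\sigma}{2}r^2$; $R$ is differentiable and $\nabla R$ is a continuous strictly increasing bijection of $\mathbb{R}$. Let $\mu>0$ be a constant such that $R$ is $\mu$-strongly convex (e.g. $\mu=\sigma$). Feedback: $p_t\in(0,1]$ and $(\mathrm{obs}_t)_{t\ge1}$ are independent Bernoulli random variables with $\Pr(\mathrm{obs}_t=1)=p_t$. IM-OCP: given $r_1$ and step sizes $\eta_t>0$, for $t\ge2$ the threshold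 $r_t$ is defined by $$\nabla R(r_t)=\nabla R(r_{t-1})-\eta_{t-1}(\alpha-E_{t-1})\frac{\mathrm{obs}_{t-1}}{p_{t-1}},$$ i.e. $r_t=(\nabla R)^{-1}\big(\nabla R(r_{t-1})-\eta_{t-1}(\alpha-E_{t-1})\mathrm{obs}_{t-1}/p_{t-1}\big)$. *)

From HB Require Import structures.
From mathcomp Require Import all_boot all_order all_algebra.
From mathcomp Require Import all_classical all_reals all_analysis.
Set Implicit Arguments. Unset Strict Implicit. Unset Printing Implicit Defensive.
Import Order.TTheory GRing.Theory Num.Theory.
Import numFieldNormedType.Exports.
Local Open Scope classical_set_scope.
Local Open Scope ring_scope.

Definition qloss {R : realType} (alpha r rs : R) : R :=
  (alpha - (if r < rs then 1 else 0)) * (r - rs).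

Definition reg_risk {R : realType} (P : probability R R) (alpha sigma : R)
  (r : R) : R :=
  fine (\int[P]_(x in setT) (qloss alpha r x)%:E) + sigma / 2 * r ^+ 2.

Definition miscov {R : realType} (rs r : R) : R := if r < rs then 1 else 0.

Definition varpi {R : realType} (eta p : nat -> R) (t : nat) : R :=
  \big[Num.max/0]_(1 <= i < t) (eta i / p i).

Definition grad_risk {R : realType} (P : probability R R) (alpha sigma : R)
  : R -> R := derive1 (reg_risk P alpha sigma).

From HB Require Import structures.
From mathcomp Require Import all_boot all_order all_algebra.
From mathcomp Require Import all_classical all_reals all_analysis.
Import Order.TTheory GRing.Theory Num.Theory.
From mathcomp Require Import ring lra.
Import numFieldNormedType.Exports.
Local Open Scope classical_set_scope.
Local Open Scope ring_scope.

(* Strong convexity makes [grad R] mu-strongly monotone, so moving the gradient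
   by at most c moves the iterate by at most c / mu in the same direction.  One
   IM-OCP step moves [grad R] by at most [alpha * eta_t / p_t] down and
   [(1 - alpha) * eta_t / p_t] up; below [0 <= r*_t] the step is a miscoverage,
   so the gradient cannot decrease, and above [B >= r*_t] it cannot increase.
   Hence an iterate outside [0, B] got there in a single step and only moves
   back, and [varpi_t] dominates every step size used so far. *)

Definition strongly_monotone {R : numDomainType} (g : R -> R) (mu : R) :=
  forall x y, mu * (y - x) ^+ 2 <= (g y - g x) * (y - x).

Lemma strongly_convex_grad_monotone {R : realFieldType} {F g : R -> R}
    {mu : R} :
  (forall x y, F x + g x * (y - x) + mu / 2 * (y - x) ^+ 2 <= F y) ->
  strongly_monotone g mu.
Proof.
move=> cvx x y; have := cvx x y; have := cvx y x.
rewrite !expr2; nra.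
Qed.

Lemma strongly_monotone_step {R : realFieldType} {g : R -> R} {mu x y c : R} :
  strongly_monotone g mu -> 0 <= mu -> 0 <= c ->
  g y <= g x + c -> mu * (y - x) <= c.
Proof.
move=> mono mu0 c0 gyx; have := mono x y; rewrite expr2 => hxy.
case: (lerP y x) => [yx | xy]; first nra.
have : 0 < y - x by rewrite subr_gt0.
nra.
Qed.

Lemma big_max_rcons {d} {T : orderType d} {I : Type} (x0 : T) (s : seq I)
    (a : I) (F : I -> T) :
  \big[Order.max/x0]_(i <- rcons s a) F i =
  Order.max (\big[Order.max/x0]_(i <- s) F i) (F a).
Proof.
elim: s => [|j s IH]; first by rewrite big_cons !big_nil maxC.
by rewrite rcons_cons !big_cons IH maxA.
Qed.

Section Varpi.
Context {R : realType} (eta p : nat -> R).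

Lemma varpi_ge0 t : 0 <= varpi eta p t.
Proof.
rewrite /varpi; elim: index_iota => [|i s IH]; first by rewrite big_nil.
by rewrite big_cons le_max IH orbT.
Qed.

Lemma varpiS t : (1 <= t)%N ->
  varpi eta p t.+1 = Num.max (varpi eta p t) (eta t / p t).
Proof.
move=> t1; rewrite /varpi /index_iota subSn // -[(t - 1).+1]addn1 iotaD.
by rewrite subnKC // cats1 big_max_rcons.
Qed.

End Varpi.

Section IMOCPStep.
Context {R : realType} {g : R -> R} {mu alpha B q s x y : R} {o : bool}.
Hypothesis mono : strongly_monotone g mu.
Hypothesis update :
  g y = g x - (alpha - miscov s x) * (if o then 1 else 0) * q.

Lemma imocp_step_lower : 0 <= mu -> 0 <= alpha <= 1 -> 0 <= q -> 0 <= s ->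
  Num.min (- (alpha * q)) (mu * x) <= mu * y.
Proof.
move=> mu0 /andP[alpha0 alpha1] q0 s0.
rewrite ge_min; case: (lerP 0 x) => [x0 | x0].
- have : g x <= g y + alpha * q.
    rewrite update /miscov; case: o; case: ifP => _ /=; nra.
  move=> /(strongly_monotone_step mono mu0 (mulr_ge0 alpha0 q0)) step.
  apply/orP; left; nra.
- have : g x <= g y + 0.
    rewrite update /miscov (lt_le_trans x0 s0); case: o => /=; nra.
  move=> /(strongly_monotone_step mono mu0 (lexx 0)) step.
  apply/orP; right; lra.
Qed.

Lemma imocp_step_upper : 0 <= mu -> 0 <= alpha <= 1 -> 0 <= q -> s <= B ->
  mu * y <= Num.max (mu * B + (1 - alpha) * q) (mu * x).
Proof.
move=> mu0 /andP[alpha0 alpha1] q0 sB.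
rewrite le_max; case: (lerP x B) => [xB | Bx].
- have alpha1' : 0 <= 1 - alpha by rewrite subr_ge0.
  have : g y <= g x + (1 - alpha) * q.
    rewrite update /miscov; case: o; case: ifP => _ /=; nra.
  move=> /(strongly_monotone_step mono mu0 (mulr_ge0 alpha1' q0)) step.
  apply/orP; left; nra.
- have : g y <= g x + 0.
    rewrite update /miscov ltNge (le_trans sB (ltW Bx)) /=; case: o => /=; nra.
  move=> /(strongly_monotone_step mono mu0 (lexx 0)) step.
  apply/orP; right; lra.
Qed.

End IMOCPStep.

Section IMOCPBounds.
Context {R : realType} {g : R -> R} {mu alpha B : R}.
Context {rstar r eta p : nat -> R} {obs : nat -> bool}.
Hypothesis mono : strongly_monotone g mu.
Hypothesis rstar_in : forall t, (1 <= t)%N -> 0 <= rstar t <= B.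
Hypothesis p_gt0 : forall t, (1 <= t)%N -> 0 < p t.
Hypothesis eta_ge0 : forall t, (1 <= t)%N -> 0 <= eta t.
Hypothesis r1_in : 0 <= r 1%N <= B.
Hypothesis update : forall t, (2 <= t)%N ->
  g (r t) = g (r t.-1)
    - eta t.-1 * (alpha - miscov (rstar t.-1) (r t.-1))
        * (if obs t.-1 then 1 else 0) / p t.-1.

Lemma imocp_scaled_bounds : 0 <= mu -> 0 <= alpha <= 1 ->
  forall t, (1 <= t)%N ->
  - (alpha * varpi eta p t) <= mu * r t <= mu * B + (1 - alpha) * varpi eta p t.
Proof.
move=> mu0 alpha01; have /andP[alpha0 alpha1] := alpha01.
have alpha1' : 0 <= 1 - alpha by rewrite subr_ge0.
elim=> // t IH t1; have v0 := varpi_ge0 eta p t.+1.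
case: t IH t1 v0 => [_ _ | t IH _] v0.
  case/andP: r1_in => r0 rB.
  have := mulr_ge0 alpha0 v0; have := mulr_ge0 alpha1' v0.
  have := mulr_ge0 mu0 r0; have := ler_wpM2l mu0 rB.
  by move=> *; apply/andP; split; lra.
have /andP[lo hi] := IH isT.
set q := eta t.+1 / p t.+1.
have q0 : 0 <= q by rewrite divr_ge0 ?eta_ge0 // ltW ?p_gt0.
have /andP[s0 sB] := rstar_in t.+1 isT.
have step : g (r t.+2) = g (r t.+1)
    - (alpha - miscov (rstar t.+1) (r t.+1)) * (if obs t.+1 then 1 else 0) * q.
  by rewrite update //= /q; ring.
have /andP[vt vq] : (varpi eta p t.+1 <= varpi eta p t.+2) &&
    (q <= varpi eta p t.+2).
  by rewrite [varpi _ _ t.+2]varpiS // !le_max !lexx ?orbT.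
have := imocp_step_lower mono step mu0 alpha01 q0 s0.
have := imocp_step_upper mono step mu0 alpha01 q0 sB.
rewrite le_max ge_min => /orP hi' /orP lo'.
have := ler_wpM2l alpha0 vt; have := ler_wpM2l alpha0 vq.
have := ler_wpM2l alpha1' vt; have := ler_wpM2l alpha1' vq.
by move=> *; apply/andP; split; [case: lo' | case: hi'] => ?; lra.
Qed.

End IMOCPBounds.

Theorem lemma1 (R : realType) (alpha B sigma mu : R) (P : probability R R)
  (rstar : nat -> R) (r eta p : nat -> R) (obs : nat -> bool) :
  0 < alpha < 1 -> 0 < B -> 0 < sigma -> 0 < mu ->
  (* P is supported on [0,B] and has a bounded density w.r.t. Lebesgue measure *)
  P `[0, B]%classic = 1%E ->
  (exists (f : R -> R) (M : R),
      measurable_fun setT f /\ (forall x, 0 <= f x <= M) /\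
      (forall A, measurable A ->
         P A = (\int[lebesgue_measure]_(x in A) (f x)%:E)%E)) ->
  (* stated properties of R and of its gradient *)
  (forall x, derivable (reg_risk P alpha sigma) x 1) ->
  continuous (grad_risk P alpha sigma) ->
  {mono (grad_risk P alpha sigma) : x y / x < y} ->
  (forall z, exists x, grad_risk P alpha sigma x = z) ->
  (* R is mu-strongly convex *)
  (forall x y, reg_risk P alpha sigma x + grad_risk P alpha sigma x * (y - x)
                 + mu / 2 * (y - x) ^+ 2 <= reg_risk P alpha sigma y) ->
  (* scores, feedback probabilities, step sizes *)
  (forall t, (1 <= t)%N -> 0 <= rstar t <= B) ->
  (forall t, (1 <= t)%N -> 0 < p t <= 1) ->
  (forall t, (1 <= t)%N -> 0 < eta t) ->
  (* initialization and IM-OCP update *)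
  0 <= r 1%N <= B ->
  (forall t, (2 <= t)%N ->
     grad_risk P alpha sigma (r t) =
     grad_risk P alpha sigma (r t.-1)
       - eta t.-1 * (alpha - miscov (rstar t.-1) (r t.-1)) * (if obs t.-1 then 1 else 0) / p t.-1) ->
  forall t, (1 < t)%N ->
    - (alpha * varpi eta p t) / mu <= r t <= B + (1 - alpha) * varpi eta p t / mu.
Proof.
move=> /andP[a0 a1] _ _ mu0 _ _ _ _ _ _ cvx rs_in p_in eta_pos r1_in upd t t1.
have mono := strongly_convex_grad_monotone cvx.
have alpha01 : 0 <= alpha <= 1 by rewrite !ltW.
have p_pos t' (ht : (1 <= t')%N) : 0 < p t' by case/andP: (p_in t' ht).
have eta_ge0 t' (ht : (1 <= t')%N) : 0 <= eta t' by exact/ltW/eta_pos.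
have /andP[lo hi] := imocp_scaled_bounds mono rs_in p_pos eta_ge0 r1_in upd
  (ltW mu0) alpha01 _ (ltnW t1).
rewrite ler_pdivrMr // -lerBlDl ler_pdivlMr //; apply/andP; split; lra.
Qed.
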